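(* Let $n\geq 3$, $p \geq 2$ and $m\geq 1$ be integers, and let $c$ be an $a$-packing coloring of $FSSD_m(K_n \star P_p)$ with $a \leq n+3$. Then $c(u_i)\neq 1$ for all $i\in\{1,\dots,n\}$, and $c(v_{i,g})\neq 1$ for all $i\in\{1,\dots,n\}$ and $g\in\{1,\dots,p\}$.
   Context: All graphs are finite and simple. An $a$-packing coloring of a graph $H$ is a map $c:V(H)\to\{1,\dots,a\}$ such that $c(x)=c(y)=i$ with $x\neq y$ implies $d_H(x,y)>i$. For a positive integer $m$, $FSSD_m(G)$ is obtained from a graph $G$ by replacing each edge $xy$ by a copy of $K_{2,m}$: the edge $xy$ is deleted and $m$ new vertices are added, each adjacent to exactly $x$ and $y$. The neighborhood corona $G\star H$ of graphs $G$ (with vertices $w_1,\dots,w_{n}$) and $H$ consists of one copy of $G$ and $n$ copies $H_1,\dots,H_n$ of $H$ (each retaining the edges of $H$), where every vertex of $H_i$ is additionally joined to every neighbor of $w_i$ in $G$. $K_n$ is the complete graph and $P_p$ the path on $p$ vertices. In $K_n\star P_p$ the vertices of $K_n$ are $u_1,\dots,u_n$ and the vertices of the copy of $P_p$ corresponding to $u_i$ are $v_{i,1},\dots,v_{i,p}$; these same names denote the corresponding (non-subdivided) vertices of $FSSD_m(K_n\star P_p)$. *)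

From mathcomp Require Import all_boot.
Set Implicit Arguments. Unset Strict Implicit. Unset Printing Implicit Defensive.

(* Simple graphs are given as a finite vertex type with a symmetric,
   irreflexive adjacency relation. *)

Definition K_adj (n : nat) : rel 'I_n := fun i j => i != j.

Definition P_adj (p : nat) : rel 'I_p :=
  fun g h => (g.+1 == h :> nat) || (h.+1 == g :> nat).

(* Neighborhood corona G * H: vertices inl w (copy of G) and inr (i, x)
   (vertex x of the copy H_i attached to w_i). *)
Definition corona_adj (V W : finType) (G : rel V) (H : rel W)
  : rel (V + V * W) :=
  fun x y =>
    match x, y with
    | inl a, inl b => G a b
    | inr (i, a), inr (j, b) => (i == j) && H a b
    | inl a, inr (i, _) => G a i
    | inr (i, _), inl a => G a i
    end.

(* Unordered edges of G, each represented once (by the ordered pair whose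
   first endpoint has smaller rank). *)
Definition fssd_edge (V : finType) (G : rel V) :=
  {e : V * V | G e.1 e.2 && (enum_rank e.1 < enum_rank e.2)%N}.

(* FSSD_m(G): each edge xy replaced by m new vertices (e, k), k : 'I_m,
   each adjacent exactly to x and y. *)
Definition fssd_adj (V : finType) (G : rel V) (m : nat)
  : rel (V + {e : V * V | G e.1 e.2 && (enum_rank e.1 < enum_rank e.2)%N} * 'I_m) :=
  fun x y =>
    match x, y with
    | inl a, inr (e, _) => (a == (val e).1) || (a == (val e).2)
    | inr (e, _), inl a => (a == (val e).1) || (a == (val e).2)
    | _, _ => false
    end.

Definition within (T : Type) (adj : rel T) (k : nat) (x y : T) : Prop :=
  exists s : seq T, [/\ path adj x s, last x s = y & (size s <= k)%N].

Definition packing_coloring (T : eqType) (adj : rel T) (a : nat)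
  (c : T -> nat) : Prop :=
  (forall x, 1 <= c x <= a)%N /\
  (forall x y, x != y -> c x = c y -> ~ within adj (c x) x y).

Definition KP_adj (n p : nat) : rel ('I_n + 'I_n * 'I_p) :=
  @corona_adj 'I_n 'I_p (@K_adj n) (@P_adj p).

From mathcomp Require Import all_boot zify.
Set Implicit Arguments. Unset Strict Implicit. Unset Printing Implicit Defensive.

(* A vertex of colour 1 forces its subdivision neighbours, pairwise at distance
   2, to take distinct colours greater than 1; [u_i] has at least [3(n-1)]
   neighbours, more than [n + 2].  For [v = v_(i,g)] take a path neighbour
   [w = v_(i,g')]; then [Q = {v, w, u_j | j <> i}] is a clique with [n + 1]
   vertices.  Colour [k] occurs at most once in a set of diameter at most [k].
   Applied to the subdivision vertices at [v] (and at [w] when [c w = 1]) and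
   the vertices of [Q] not coloured 1, which form groups of diameter 2 lying
   within distance 3 or 4 of each other, this gives [2n <= a] when [c w <> 1]
   and [3n - 2 <= a + 2] when [c w = 1], both impossible for [n >= 4].  For
   [n = 3], [FSSD_1(K_3 * P_2)] embeds around [v], and an exhaustive search
   shows that it has no such colouring with 6 colours. *)

Section Walks.
Variables (T : Type) (e : rel T).

Lemma within_refl d x : within e d x x.
Proof. by exists [::]. Qed.

Lemma within_adj x y : e x y -> within e 1 x y.
Proof. by move=> exy; exists [:: y]; rewrite /= exy. Qed.

Lemma within_leq d d' x y : within e d x y -> d <= d' -> within e d' x y.
Proof. by move=> [s [ps ls ss]] le; exists s; split=> //; apply: leq_trans le. Qed.

Lemma within_trans d1 d2 x y z :
  within e d1 x y -> within e d2 y z -> within e (d1 + d2) x z.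
Proof.
case=> s [ps ls ss] [t [pt lt st]]; exists (s ++ t).
by split; rewrite ?cat_path ?last_cat ?size_cat ?ls ?ps ?pt ?leq_add.
Qed.

Lemma within_sym d x y : symmetric e -> within e d x y -> within e d y x.
Proof.
move=> esym [s [ps ls ss]]; exists (rev (belast x s)); split.
- by rewrite -ls rev_path; apply: sub_path ps => u v /=; rewrite esym.
- by case: s ls {ps ss} => [|z s] /= ls; rewrite -ls ?rev_cons ?last_rcons.
- by rewrite size_rev size_belast.
Qed.

End Walks.

Lemma card_le_inj_range (T : finType) (A : {set T}) (f : T -> nat) lo hi :
  {in A &, injective f} -> {in A, forall x, lo <= f x < hi} -> #|A| <= hi - lo.
Proof.
move=> finj frange; rewrite cardE -(size_map f) -(size_iota lo (hi - lo)).
apply: uniq_leq_size => [|z /mapP[x]].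
  by rewrite map_inj_in_uniq ?enum_uniq // => x y; rewrite !mem_enum; apply: finj.
rewrite mem_enum => /frange /andP[lo_fx fx_hi] ->.
by rewrite mem_iota lo_fx subnKC ?fx_hi // (leq_trans lo_fx (ltnW fx_hi)).
Qed.

Section Diameter.
Variables (T : finType) (e : rel T).

Definition diam_le (k : nat) (Y : {set T}) := {in Y &, forall v w, within e k v w}.

Lemma diam_le_leq k l Y : diam_le k Y -> k <= l -> diam_le l Y.
Proof. by move=> dY kl v w vY wY; apply: within_leq (dY v w vY wY) kl. Qed.

Lemma diam_le_subset k (Y Z : {set T}) : Y \subset Z -> diam_le k Z -> diam_le k Y.
Proof. by move=> /subsetP YZ dZ v w /YZ vZ /YZ wZ; apply: dZ. Qed.

Lemma diam_le_setU k (Y Z : {set T}) : symmetric e -> diam_le k Y -> diam_le k Z ->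
  {in Y & Z, forall v w, within e k v w} -> diam_le k (Y :|: Z).
Proof.
move=> esym dY dZ dYZ v w; rewrite !inE.
by case/orP=> [vY|vZ] /orP[wY|wZ]; auto; apply: within_sym esym _; auto.
Qed.

End Diameter.

Section PackingColoring.
Variables (T : finType) (e : rel T) (a : nat) (c : T -> nat).
Hypothesis hc : packing_coloring e a c.

Lemma packing_color_range x : 1 <= c x <= a.
Proof. by case: hc. Qed.

Lemma packing_eq_close k x y : within e k x y -> k <= c x -> c x = c y -> x = y.
Proof.
move=> wxy le cxy; apply/eqP; apply: contraT => nxy; exfalso.
by case: hc => _ /(_ x y nxy cxy); apply; apply: within_leq wxy le.
Qed.

Lemma packing_color1_adj x y : x != y -> e x y -> c x = 1 -> 1 < c y.
Proof.
move=> nxy exy cx1; have /andP[cy1 _] := packing_color_range y.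
rewrite ltn_neqAle cy1 andbT; apply: contra nxy => /eqP cy.
by apply/eqP; apply: (packing_eq_close (within_adj exy)); rewrite cx1.
Qed.

Lemma packing_inj_high k (Y : {set T}) :
  diam_le e k Y -> {in Y :&: [set x | k <= c x] &, injective c}.
Proof.
move=> dY x y; rewrite !inE => /andP[xY kx] /andP[yY _].
exact: packing_eq_close (dY x y xY yY) kx.
Qed.

Lemma card_high_colors_le k (Y : {set T}) :
  diam_le e k Y -> #|Y :&: [set x | k <= c x]| <= a.+1 - k.
Proof.
move=> dY; apply: card_le_inj_range (packing_inj_high dY) _ => x.
by rewrite !inE ltnS => /andP[_ ->]; case/andP: (packing_color_range x).
Qed.

Lemma card_color_class_le1 k j (Y : {set T}) :
  diam_le e k Y -> k <= j -> #|Y :&: [set x | c x == j]| <= 1.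
Proof.
move=> dY kj; rewrite -(subSnn j).
apply: (card_le_inj_range (f := c)) => [x y|x]; last first.
  by rewrite !inE => /andP[_ /eqP->]; rewrite leqnn ltnSn.
rewrite !inE => /andP[xY /eqP cx] /andP[yY _] cxy.
by apply: packing_eq_close (dY x y xY yY) _ cxy; rewrite cx.
Qed.

Lemma leq_card_setIUl (Y Z P : {set T}) : #|(Y :|: Z) :&: P| <= #|Y :&: P| + #|Z :&: P|.
Proof. by rewrite setIUl; apply: (leq_card_setU _ _).1. Qed.

Lemma card_le_diam23 (Y1 Y2 : {set T}) :
  diam_le e 2 Y1 -> diam_le e 2 Y2 -> diam_le e 3 (Y1 :|: Y2) ->
  {in Y1 :|: Y2, forall v, 1 < c v} -> #|Y1 :|: Y2| <= 2 + (a - 2).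
Proof.
set X := Y1 :|: Y2 => d1 d2 dX gt1.
have X_split : X \subset (X :&: [set v | c v == 2]) :|: (X :&: [set v | 3 <= c v]).
  by apply/subsetP => v vX; rewrite in_setU !in_setI vX !inE /= eq_sym -leq_eqVlt gt1.
have card_2 : #|X :&: [set v | c v == 2]| <= 2.
  apply: leq_trans (leq_card_setIUl _ _ _) _.
  by rewrite -[2]/(1 + 1) leq_add // (card_color_class_le1 _ (leqnn 2)).
have := leq_trans (subset_leq_card X_split) (leq_card_setU _ _).1.
have := card_high_colors_le dX; lia.
Qed.

Lemma card_le_diam234 (Y1 Y2 Y3 : {set T}) :
  diam_le e 2 Y1 -> diam_le e 2 Y2 -> diam_le e 2 Y3 ->
  diam_le e 3 (Y1 :|: Y2) -> diam_le e 4 (Y1 :|: Y2 :|: Y3) ->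
  {in Y1 :|: Y2 :|: Y3, forall v, 1 < c v} -> #|Y1 :|: Y2 :|: Y3| <= 5 + (a - 3).
Proof.
set X := Y1 :|: Y2 :|: Y3 => d1 d2 d3 d12 dX gt1.
have X_split : X \subset (X :&: [set v | c v == 2]) :|: (X :&: [set v | c v == 3])
                         :|: (X :&: [set v | 4 <= c v]).
  apply/subsetP => v vX; rewrite 2!in_setU !in_setI vX !inE /=.
  by move: (gt1 v vX); case: (c v) => [|[|[|[|]]]].
have card_2 : #|X :&: [set v | c v == 2]| <= 3.
  apply: leq_trans (leq_card_setIUl _ _ _) _; rewrite -[3]/(2 + 1) leq_add //.
    apply: leq_trans (leq_card_setIUl _ _ _) _.
    by rewrite -[2]/(1 + 1) leq_add // (card_color_class_le1 _ (leqnn 2)).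
  exact: card_color_class_le1 d3 (leqnn 2).
have card_3 : #|X :&: [set v | c v == 3]| <= 2.
  apply: leq_trans (leq_card_setIUl _ _ _) _.
  by rewrite -[2]/(1 + 1) leq_add ?(card_color_class_le1 d12 (leqnn 3))
                                   ?(card_color_class_le1 d3 (leqnSn 2)).
have := leq_trans (subset_leq_card X_split) (leq_card_setU _ _).1.
have := (leq_card_setU (X :&: [set v | c v == 2]) (X :&: [set v | c v == 3])).1.
have := card_high_colors_le dX; lia.
Qed.

End PackingColoring.

Section Subdivision.
Variables (V : finType) (G : rel V) (m : nat).
Hypotheses (Gsym : symmetric G) (Girr : irreflexive G).
Variable k0 : 'I_m.

Local Notation E := {e : V * V | G e.1 e.2 && (enum_rank e.1 < enum_rank e.2)%N}.
Local Notation T := (V + E * 'I_m)%type.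
Local Notation adj := (@fssd_adj V G m).

(* The [k0]-th vertex subdividing the edge [xy]; the fallback [inl x] is only
   reached when [x] and [y] are not adjacent. *)
Definition subdiv (x y : V) : T :=
  if insub (x, y) : option E is Some e then inr (e, k0)
  else if insub (y, x) : option E is Some e then inr (e, k0) else inl x.

Lemma subdivP x y : G x y ->
  exists2 e : E, subdiv x y = inr (e, k0) & val e = (x, y) \/ val e = (y, x).
Proof.
move=> gxy; rewrite /subdiv.
case: insubP => [e _ ve|]; first by exists e; [|left].
rewrite /= gxy /= => ryx.
case: insubP => [e _ ve|]; first by exists e; [|right].
rewrite /= Gsym gxy /=.
have nxy : x != y by apply: contraTneq gxy => ->; rewrite Girr.
have : enum_rank x != enum_rank y by apply: contra nxy => /eqP/enum_rank_inj ->.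
by rewrite neq_ltn (negbTE ryx) /= => ->.
Qed.

Lemma adj_subdiv x y : G x y -> adj (inl x) (subdiv x y) && adj (inl y) (subdiv x y).
Proof. by case/subdivP => e -> [] ve; rewrite /= ve /= !eqxx ?orbT. Qed.

Lemma fssd_adj_sym : symmetric adj.
Proof. by case=> [a|[e k]] [b|[e' k']]. Qed.

Lemma subdiv_neq_inl x y z : G x y -> subdiv x y != inl z.
Proof. by case/subdivP => e ->. Qed.

Lemma subdiv_inj x y x' y' : G x y -> G x' y' -> subdiv x y = subdiv x' y' ->
  (x = x' /\ y = y') \/ (x = y' /\ y = x').
Proof.
case/subdivP => e -> ve; case/subdivP => e' -> ve' [] /(congr1 val).
by case: ve => ->; case: ve' => -> [-> ->]; auto.
Qed.

Lemma subdiv_injr x y z : G x y -> G x z -> subdiv x y = subdiv x z -> y = z.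
Proof. by move=> gxy gxz /(subdiv_inj gxy gxz) [[_ //]|[-> ->]]. Qed.

Lemma within_subdiv_inl x y : G x y -> within adj 1 (subdiv x y) (inl y).
Proof.
by move=> gxy; case/andP: (adj_subdiv gxy) => _ ay; apply: within_adj; rewrite fssd_adj_sym.
Qed.

Lemma within_inl_inl x y : G x y -> within adj 2 (inl x) (inl y).
Proof.
move=> gxy; case/andP: (adj_subdiv gxy) => ax _.
exact: within_trans (within_adj ax) (within_subdiv_inl gxy).
Qed.

Lemma within_subdivs x y z : G x y -> G x z -> within adj 2 (subdiv x y) (subdiv x z).
Proof.
move=> gxy gxz; case/andP: (adj_subdiv gxy) => axy _; case/andP: (adj_subdiv gxz) => axz _.
rewrite fssd_adj_sym in axy.
exact: within_trans (within_adj axy) (within_adj axz).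
Qed.

Lemma within_subdiv_subdiv x y z z' : G x y -> G x z -> G y z' ->
  within adj 4 (subdiv x z) (subdiv y z').
Proof.
move=> gxy gxz gyz'; case/andP: (adj_subdiv gyz') => ay _.
exact: within_trans (within_trans (within_subdivs gxz gxy) (within_subdiv_inl gxy))
                    (within_adj ay).
Qed.

Lemma diam_subdivs x (N : {set V}) :
  {in N, forall y, G x y} -> diam_le adj 2 [set subdiv x y | y in N].
Proof.
by move=> Gx _ _ /imsetP[y /Gx gxy ->] /imsetP[z /Gx gxz ->]; apply: within_subdivs.
Qed.

Lemma disjoint_subdivs_inl x (N M : {set V}) : {in N, forall y, G x y} ->
  [disjoint [set subdiv x y | y in N] & [set inl z | z in M]].
Proof.
move=> Gx; rewrite disjoints_subset; apply/subsetP => _ /imsetP[y /Gx gxy ->].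
by rewrite inE; apply/imsetP => -[z _] /eqP; apply/negP; apply: subdiv_neq_inl.
Qed.

Variables (a : nat) (c : T -> nat).
Hypothesis hc : packing_coloring adj a c.

Lemma subdiv_color_gt1 x y : G x y -> c (inl x) = 1 -> 1 < c (subdiv x y).
Proof.
move=> gxy cx; apply: (packing_color1_adj hc _ _ cx).
  by rewrite eq_sym subdiv_neq_inl.
by case/andP: (adj_subdiv gxy).
Qed.

Lemma color1_degree_lt x : c (inl x) = 1 -> #|[set y | G x y]| < a.
Proof.
move=> cx; set N := [set y | G x y].
have Gx : {in N, forall y, G x y} by move=> y; rewrite inE.
have -> : #|N| = #|[set subdiv x y | y in N]|.
  by rewrite card_in_imset // => y z /Gx gxy /Gx gxz /(subdiv_injr gxy gxz).
have := card_high_colors_le hc (diam_subdivs Gx).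
rewrite (setIidPl _); last first.
  by apply/subsetP => _ /imsetP[y /Gx gxy ->]; rewrite inE subdiv_color_gt1.
have /andP[_] := packing_color_range hc (inl x); rewrite cx; lia.
Qed.

Variable Q : {set V}.
Hypothesis Qclique : {in Q &, forall y z, y != z -> G y z}.

Lemma diam_clique_inl : diam_le adj 2 [set inl y | y in Q].
Proof.
move=> _ _ /imsetP[y yQ ->] /imsetP[z zQ ->].
by have [->|nyz] := eqVneq y z; [apply: within_refl | apply/within_inl_inl/Qclique].
Qed.

Lemma within_subdiv_clique w y z : G w y -> y \in Q -> z \in Q ->
  within adj 3 (subdiv w y) (inl z).
Proof.
move=> gwy yQ zQ; apply: within_trans (within_subdiv_inl gwy) _.
by apply: diam_clique_inl; apply: imset_f.
Qed.

Lemma diam_star_clique x (N M : {set V}) : x \in Q -> N \subset Q :\ x -> M \subset Q ->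
  diam_le adj 3 ([set subdiv x y | y in N] :|: [set inl z | z in M]).
Proof.
move=> xQ NQ MQ.
have Gx : {in N, forall y, G x y}.
  move=> y /(subsetP NQ); rewrite !inE => /andP[yx yQ].
  by apply: Qclique; rewrite // eq_sym.
apply: diam_le_setU fssd_adj_sym (diam_le_leq (diam_subdivs Gx) _) _ _ => //.
  exact: diam_le_leq (diam_le_subset (imsetS _ MQ) diam_clique_inl) _.
move=> _ _ /imsetP[y yN ->] /imsetP[z zM ->].
apply: within_subdiv_clique (Gx _ yN) _ (subsetP MQ _ zM).
by have := subsetP NQ _ yN; rewrite !inE => /andP[].
Qed.

Lemma card_clique_le_color1 x : x \in Q -> c (inl x) = 1 ->
  {in Q :\ x, forall y, c (inl y) != 1} -> (#|Q| - 1).*2 <= 2 + (a - 2).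
Proof.
move=> xQ cx others.
have Gx : {in Q :\ x, forall y, G x y}.
  by move=> y; rewrite !inE => /andP[yx yQ]; apply: Qclique; rewrite // eq_sym.
have subQ : Q :\ x \subset Q by apply: subD1set.
set S := [set subdiv x y | y in Q :\ x]; pose O : {set T} := [set inl y | y in Q :\ x].
have card_Qx : #|Q :\ x| = #|Q| - 1 by rewrite (cardsD1 x Q) xQ add1n subn1.
have card_S : #|S| = #|Q| - 1.
  by rewrite card_in_imset ?card_Qx // => y z /Gx gxy /Gx gxz /(subdiv_injr gxy gxz).
have card_O : #|O| = #|Q| - 1 by rewrite card_imset ?card_Qx // => ? ? [].
have /eqP card_X : #|S :|: O| == #|S| + #|O|.
  by rewrite (leq_card_setU S O).2 disjoint_subdivs_inl.
have -> : (#|Q| - 1).*2 = #|S :|: O| by rewrite card_X card_S card_O addnn.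
apply: (card_le_diam23 hc).
- exact: diam_subdivs Gx.
- exact: diam_le_subset (imsetS _ subQ) diam_clique_inl.
- exact: diam_star_clique xQ (subxx _) subQ.
move=> v /setUP[/imsetP[y /Gx gxy ->]|/imsetP[y /others cy ->]].
  exact: subdiv_color_gt1.
by rewrite ltn_neqAle eq_sym cy; case/andP: (packing_color_range hc (inl y)).
Qed.

Lemma card_clique_le_color1_pair x y : x \in Q -> y \in Q -> x != y ->
  c (inl x) = 1 -> c (inl y) = 1 -> {in Q :\ x :\ y, forall z, c (inl z) != 1} ->
  3 * #|Q| - 5 <= 5 + (a - 3).
Proof.
move=> xQ yQ nxy cx cy others.
have Gx : {in Q :\ x, forall z, G x z}.
  by move=> z; rewrite !inE => /andP[zx zQ]; apply: Qclique; rewrite // eq_sym.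
have Gy : {in Q :\ x :\ y, forall z, G y z}.
  by move=> z; rewrite !inE => /and3P[zy zx zQ]; apply: Qclique; rewrite // eq_sym.
have Gxy : G x y by apply: Qclique.
have sub_xy : Q :\ x :\ y \subset Q :\ x by apply: subD1set.
have subQ : Q :\ x \subset Q by apply: subD1set.
have subQ' := subset_trans sub_xy subQ.
set S := [set subdiv x z | z in Q :\ x]; set R := [set subdiv y z | z in Q :\ x :\ y].
pose O : {set T} := [set inl z | z in Q :\ x :\ y].
have card_X : #|S :|: O :|: R| = 3 * #|Q| - 5.
  have card_Qx : #|Q :\ x| = #|Q| - 1 by rewrite (cardsD1 x Q) xQ add1n subn1.
  have card_Qxy : #|Q :\ x :\ y| = #|Q| - 2.
    by have := cardsD1 y (Q :\ x); rewrite !inE eq_sym nxy yQ card_Qx /=; lia.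
  have card_S : #|S| = #|Q| - 1.
    by rewrite card_in_imset ?card_Qx // => z z' /Gx gxz /Gx gxz' /(subdiv_injr gxz gxz').
  have card_O : #|O| = #|Q| - 2 by rewrite card_imset ?card_Qxy // => ? ? [].
  have card_R : #|R| = #|Q| - 2.
    by rewrite card_in_imset ?card_Qxy // => z z' /Gy gyz /Gy gyz' /(subdiv_injr gyz gyz').
  have disj_SR : [disjoint S & R].
    rewrite disjoints_subset; apply/subsetP => _ /imsetP[z /Gx gxz ->].
    rewrite inE; apply/imsetP => -[z' z'Q]; have gyz' := Gy _ z'Q.
    case/(subdiv_inj gxz gyz') => [[xy _]|[xz' _]]; first by rewrite xy eqxx in nxy.
    by move: z'Q; rewrite xz' !inE eqxx andbF.
  have /eqP-> : #|S :|: O :|: R| == #|S :|: O| + #|R|.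
    rewrite (leq_card_setU _ R).2 -setI_eq0 setIUl setU_eq0 !setI_eq0 disj_SR.
    by rewrite disjoint_sym (disjoint_subdivs_inl _ Gy).
  have /eqP-> : #|S :|: O| == #|S| + #|O|.
    by rewrite (leq_card_setU S O).2 disjoint_subdivs_inl.
  have : [set x; y] \subset Q by rewrite subUset !sub1set xQ yQ.
  by move/subset_leq_card; rewrite cards2 nxy card_S card_O card_R; lia.
rewrite -card_X; apply: (card_le_diam234 hc).
- exact: diam_subdivs Gx.
- exact: diam_le_subset (imsetS _ subQ') diam_clique_inl.
- exact: diam_subdivs Gy.
- exact: diam_star_clique xQ (subxx _) subQ'.
- apply: diam_le_setU fssd_adj_sym _ (diam_le_leq (diam_subdivs Gy) _) _ => //.
    exact: diam_le_leq (diam_star_clique xQ (subxx _) subQ') _.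
  move=> v _ /setUP[/imsetP[z zQ ->]|/imsetP[z zQ ->]] /imsetP[z' z'Q ->].
    exact: within_subdiv_subdiv Gxy (Gx _ zQ) (Gy _ z'Q).
  apply: within_sym fssd_adj_sym (within_leq _ (leqnSn 3)).
  exact: within_subdiv_clique (Gy _ z'Q) (subsetP subQ' _ z'Q) (subsetP subQ' _ zQ).
move=> v /setUP[/setUP[/imsetP[z /Gx gxz ->]|/imsetP[z /others cz ->]]|/imsetP[z /Gy gyz ->]].
- exact: subdiv_color_gt1.
- by rewrite ltn_neqAle eq_sym cz; case/andP: (packing_color_range hc (inl z)).
- exact: subdiv_color_gt1.
Qed.

End Subdivision.

Section NeighborhoodCorona.
Variables n p : nat.
Local Notation B := ('I_n + 'I_n * 'I_p)%type.
Local Notation KP := (@KP_adj n p).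

Lemma P_adj_sym : symmetric (@P_adj p).
Proof. by move=> g h; rewrite /P_adj orbC. Qed.

Lemma P_adj_irr : irreflexive (@P_adj p).
Proof. by move=> g; rewrite /P_adj orbb eqn_leq ltnn. Qed.

Lemma P_adj_exists (g : 'I_p) : 1 < p -> exists h, P_adj g h.
Proof.
move=> p_gt1; case: (ltnP g.+1 p) => [lt_g1p|le_pg1].
  by exists (Ordinal lt_g1p); rewrite /P_adj /= eqxx.
have lt_gp : g.-1 < p by apply: leq_ltn_trans (leq_pred g) (ltn_ord g).
exists (Ordinal lt_gp); rewrite /P_adj /= prednK ?eqxx ?orbT //.
by rewrite -ltnS; apply: leq_trans p_gt1 le_pg1.
Qed.

Lemma KP_adj_sym : symmetric KP.
Proof.
case=> [i|[i g]] [j|[j h]] //=; rewrite /K_adj.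
- by rewrite eq_sym.
- by rewrite eq_sym P_adj_sym.
Qed.

Lemma KP_adj_irr : irreflexive KP.
Proof. by case=> [i|[i g]] /=; rewrite /K_adj ?eqxx // P_adj_irr andbF. Qed.

Lemma card_KP_nbhd_inl i : #|[set y | KP (inl i) y]| = n.-1 * p.+1.
Proof.
pose f (jo : 'I_n * option 'I_p) : B := if jo.2 is Some h then inr (jo.1, h) else inl jo.1.
have -> : [set y | KP (inl i) y] = f @: setX [set~ i] setT.
  apply/setP => y; rewrite inE; apply/idP/imsetP => [|[[j o]]].
    by case: y => [j|[j h]]; rewrite /= /K_adj => ij;
      [exists (j, None) | exists (j, Some h)]; rewrite // !inE eq_sym ij.
  by case: o => [h|]; rewrite !inE andbT => ji ->; rewrite /= /K_adj eq_sym.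
rewrite card_imset ?cardsX ?cardsC1 ?cardsT ?card_option ?card_ord //.
by move=> [j [h|]] [j' [h'|]] //= [] -> // ->.
Qed.

Definition KP_clique i (g g' : 'I_p) : {set B} :=
  inr (i, g) |: (inr (i, g') |: [set inl j | j in [set~ i]]).

Lemma KP_clique_adj i g g' : P_adj g g' ->
  {in KP_clique i g g' &, forall y z, y != z -> KP y z}.
Proof.
move=> gg' y z; rewrite !inE.
move=> /or3P[/eqP->|/eqP->|/imsetP[j + ->]] /or3P[/eqP->|/eqP->|/imsetP[j' + ->]];
  rewrite ?inE ?eqxx //= /K_adj ?eqxx //= ?(P_adj_sym g') //.
Qed.

Lemma card_KP_clique i g g' : g != g' -> #|KP_clique i g g'| = n.+1.
Proof.
move=> ngg'; have n_gt0 : 0 < n by apply: leq_ltn_trans (ltn_ord i).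
have inr_notin h : inr (i, h) \notin ([set inl j | j in [set~ i]] : {set B}).
  by apply/imsetP => -[].
have inr_neq : (inr (i, g) == inr (i, g') :> B) = false.
  by apply/eqP => -[gg']; rewrite gg' eqxx in ngg'.
rewrite /KP_clique !cardsU1 !inE card_imset; last by move=> ? ? [].
by rewrite cardsC1 card_ord inr_neq !(negbTE (inr_notin _)) /= !add1n prednK.
Qed.

End NeighborhoodCorona.

Section BoundedDistance.
Variables (C : eqType) (e : rel C) (vs : seq C).

Definition ball_step (S : seq C) : seq C :=
  S ++ [seq y <- vs | (y \notin S) && has (e^~ y) S].

Definition dist_row (D : nat) (x : C) : seq nat :=
  let balls := traject ball_step [:: x] D in [seq find (fun S => y \in S) balls | y <- vs].

Definition dist_table (D : nat) : seq (seq nat) := [seq dist_row D x | x <- vs].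

Variables (T : Type) (e' : rel T) (f : C -> T).
Hypothesis f_hom : {in vs &, forall u v, e u v -> e' (f u) (f v)}.

Lemma iter_ball_step_sub d x : x \in vs -> {subset iter d ball_step [:: x] <= vs}.
Proof.
move=> xvs; elim: d => [|d IH] y /=; first by rewrite inE => /eqP->.
by rewrite mem_cat mem_filter => /orP[/IH|/andP[_]].
Qed.

Lemma iter_ball_step_within d x y : x \in vs ->
  y \in iter d ball_step [:: x] -> within e' d (f x) (f y).
Proof.
move=> xvs; elim: d y => [|d IH] y /=.
  by rewrite inE => /eqP->; apply: within_refl.
rewrite mem_cat => /orP[/IH wxy|]; first exact: within_leq wxy (leqnSn d).
rewrite mem_filter => /andP[/andP[_ /hasP[z zS ezy]] yvs]; rewrite -addn1.
apply: within_trans (IH z zS) (within_adj _).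
by apply: f_hom ezy; rewrite // (iter_ball_step_sub xvs zS).
Qed.

Lemma dist_table_within x0 D r s : r < size vs -> s < size vs ->
  let d := nth 0 (nth [::] (dist_table D) r) s in
  d < D -> within e' d (f (nth x0 vs r)) (f (nth x0 vs s)).
Proof.
move=> rvs svs; rewrite /dist_table (nth_map x0) // /dist_row (nth_map x0) //=.
set balls := traject _ _ D; set P := fun S => _ \in S => dD.
have /(nth_find [:: nth x0 vs r]) : has P balls by rewrite has_find size_traject.
by rewrite nth_traject //; apply: iter_ball_step_within; rewrite mem_nth.
Qed.

End BoundedDistance.

Definition fits (row prev : seq nat) (k : nat) : bool :=
  all (fun dc => (dc.2 != k) || (k < dc.1)) (zip row prev).

(* The vertices already coloured have the colours [prev], most recent first;
   the next one takes a colour from the head of [doms] compatible with the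
   distances in the head of [rows], listed in the same order.  [if] rather than
   [&&]: the VM evaluates both arguments of [andb], which would turn the
   backtracking into a full enumeration. *)
Fixpoint extendable (rows doms : seq (seq nat)) (prev : seq nat) : bool :=
  match rows, doms with
  | row :: rows', dom :: doms' =>
      has (fun k => if fits row prev k then extendable rows' doms' (k :: prev) else false) dom
  | _, _ => true
  end.

Definition search_rows (tbl : seq (seq nat)) (K : nat) : seq (seq nat) :=
  [seq [seq nth 0 (nth [::] tbl r) s | s <- rev (iota 0 r)] | r <- iota 0 K].

Lemma extendable_complete tbl (dom : nat -> seq nat) K (col : nat -> nat) :
  (forall r, r < K -> col r \in dom r) ->
  (forall r s, s < r < K -> col r = col s -> col r < nth 0 (nth [::] tbl r) s) ->
  extendable (search_rows tbl K) [seq dom r | r <- iota 0 K] [::].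
Proof.
move=> col_dom col_fits.
suff ext t : t <= K ->
    extendable [seq [seq nth 0 (nth [::] tbl r) s | s <- rev (iota 0 r)] | r <- iota t (K - t)]
               [seq dom r | r <- iota t (K - t)] [seq col s | s <- rev (iota 0 t)].
  by have := ext 0 (leq0n K); rewrite subn0.
move=> tK; move Kt: (K - t) => d; elim: d t tK Kt => [|d IH] t tK Kt //=.
have tK' : t < K by lia.
apply/hasP; exists (col t); first exact: col_dom.
have -> : fits [seq nth 0 (nth [::] tbl t) s | s <- rev (iota 0 t)]
              [seq col s | s <- rev (iota 0 t)] (col t).
  rewrite /fits zip_map; apply/allP => _ /mapP[s + ->] /=.
  rewrite mem_rev mem_iota add0n => st; rewrite eq_sym.
  by have [cts|] := eqVneq (col t) (col s); rewrite //= col_fits //; lia.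
have -> : col t :: [seq col s | s <- rev (iota 0 t)] = [seq col s | s <- rev (iota 0 t.+1)].
  by rewrite -addn1 iotaD rev_cat map_cat /= add0n.
by apply: IH; lia.
Qed.

(* [(k, None)] codes [u_k] and [(k, Some h)] codes [v_(k,h)] in [K_3 * P_2]; in
   [FSSD_1(K_3 * P_2)] the pair [(x, x)] codes the vertex [x] and [(x, y)] the
   vertex subdividing the edge [xy]. *)
Definition kpcode := (nat * option bool)%type.

Definition kpcode_adj : rel kpcode := fun x y =>
  if (x.2, y.2) is (Some h, Some h') then (x.1 == y.1) && (h != h') else x.1 != y.1.

Definition kp3 : seq kpcode :=
  [seq (k, o) | k <- iota 0 3, o <- [:: Some false; Some true; None]].

Definition fcode := (kpcode * kpcode)%type.

Definition fcode_adj : rel fcode := fun x y =>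
  [&& x.1 == x.2, y.1 != y.2 & x.1 \in [:: y.1; y.2]] ||
  [&& y.1 == y.2, x.1 != x.2 & y.1 \in [:: x.1; x.2]].

Definition fssd3 : seq fcode :=
  [seq (x, x) | x <- kp3] ++
  [seq (x, y) | x <- kp3, y <- [seq y <- kp3 | kpcode_adj x y & index x kp3 < index y kp3]].

Definition fssd3_at (r : nat) : fcode := nth ((0, None), (0, None)) fssd3 r.

Definition fcode_colors (x : fcode) : seq nat :=
  if x == ((0, Some false), (0, Some false)) then [:: 1]
  else if (x.1 == x.2) && (x.1.2 == None) then iota 2 5 else iota 1 6.

Lemma fssd3_valid :
  {in fssd3, forall x, [&& x.1.1 < 3, x.2.1 < 3 & (x.1 == x.2) || kpcode_adj x.1 x.2]}.
Proof. by apply/allP; vm_compute. Qed.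

Lemma fssd3_uniq : uniq fssd3.
Proof. by vm_compute. Qed.

Lemma fssd3_swap : {in fssd3, forall x, (x.1 == x.2) || ((x.2, x.1) \notin fssd3)}.
Proof. by apply/allP; vm_compute. Qed.

(* Distances are computed up to 7, enough for colours at most 6. *)
Lemma fssd3_not_colorable :
  ~~ extendable (search_rows (dist_table fcode_adj fssd3 7) (size fssd3))
       [seq fcode_colors (fssd3_at r) | r <- iota 0 (size fssd3)] [::].
Proof. by vm_compute. Qed.

Section SmallCase.
Variables (n p m : nat) (k0 : 'I_m) (ix : nat -> 'I_n) (px : nat -> bool -> 'I_p).
Hypothesis ix_inj : forall k l, k < 3 -> l < 3 -> ix k = ix l -> k = l.
Hypothesis px_adj : forall k, P_adj (px k false) (px k true).

Local Notation B := ('I_n + 'I_n * 'I_p)%type.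
Local Notation KP := (@KP_adj n p).
Local Notation T :=
  (B + {e : B * B | KP e.1 e.2 && (enum_rank e.1 < enum_rank e.2)%N} * 'I_m)%type.
Local Notation adj := (@fssd_adj B KP m).

Definition kp_of_code (x : kpcode) : B :=
  if x.2 is Some h then inr (ix x.1, px x.1 h) else inl (ix x.1).

Lemma ix_neq k l : k < 3 -> l < 3 -> k != l -> ix k != ix l.
Proof. by move=> k3 l3; apply: contra => /eqP/(ix_inj k3 l3)->. Qed.

Lemma kp_of_code_adj x y : x.1 < 3 -> y.1 < 3 -> kpcode_adj x y ->
  KP (kp_of_code x) (kp_of_code y).
Proof.
case: x => k [h|]; case: y => l [h'|]; rewrite /kpcode_adj /= /K_adj => k3 l3.
- case/andP=> /eqP<- hh'; rewrite eqxx /=.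
  by case: h h' hh' => [] [] //= _; rewrite ?px_adj // P_adj_sym px_adj.
- by move=> kl; rewrite eq_sym ix_neq.
- exact: ix_neq.
- exact: ix_neq.
Qed.

Lemma kp_of_code_inj x y : x.1 < 3 -> y.1 < 3 -> kp_of_code x = kp_of_code y -> x = y.
Proof.
case: x => k [h|]; case: y => l [h'|] //= k3 l3 [/(ix_inj k3 l3) kl]; rewrite -kl //.
by case: h h' => [] [] // phh'; have := px_adj k; rewrite phh' P_adj_irr.
Qed.

Definition fssd_of_code (x : fcode) : T :=
  if x.1 == x.2 then inl (kp_of_code x.1) else subdiv KP k0 (kp_of_code x.1) (kp_of_code x.2).

Lemma subdiv_code_neq_inl z x y : x.1 < 3 -> y.1 < 3 -> kpcode_adj x y ->
  subdiv KP k0 (kp_of_code x) (kp_of_code y) != inl z.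
Proof.
move=> x3 y3 xy; apply: (subdiv_neq_inl (@KP_adj_sym n p) (@KP_adj_irr n p)).
exact: kp_of_code_adj.
Qed.

Lemma fssd_of_code_adj :
  {in fssd3 &, forall x y, fcode_adj x y -> adj (fssd_of_code x) (fssd_of_code y)}.
Proof.
have adj_vertex_subdiv x y : y \in fssd3 ->
    [&& x.1 == x.2, y.1 != y.2 & x.1 \in [:: y.1; y.2]] ->
    adj (fssd_of_code x) (fssd_of_code y).
  case: x y => [x1 x2] [y1 y2] /fssd3_valid /= /and3P[y13 y23 vy] /and3P[/eqP<- ny xy].
  rewrite /fssd_of_code /= eqxx (negbTE ny) /=; rewrite (negbTE ny) /= in vy.
  case/andP: (adj_subdiv (@KP_adj_sym n p) (@KP_adj_irr n p) k0 (kp_of_code_adj y13 y23 vy)).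
  by rewrite !inE in xy; case/orP: xy => /eqP->.
move=> x y xS yS /orP[xy|yx]; first exact: adj_vertex_subdiv.
by rewrite fssd_adj_sym; apply: adj_vertex_subdiv.
Qed.

Lemma fssd_of_code_inj : {in fssd3 &, injective fssd_of_code}.
Proof.
move=> [x1 x2] [y1 y2] xS yS; have := fssd3_swap yS.
move: (fssd3_valid xS) (fssd3_valid yS); rewrite /fssd_of_code /=.
case: (eqVneq x1 x2) => [<-|nx]; case: (eqVneq y1 y2) => [<-|ny] /=.
- by case/andP=> x13 _ /andP[y13 _] _ [/(kp_of_code_inj x13 y13)->].
- move=> _ /and3P[y13 y23 vy] _ /esym/eqP.
  by rewrite (negbTE (subdiv_code_neq_inl _ y13 y23 vy)).
- move=> /and3P[x13 x23 vx] _ _ /eqP.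
  by rewrite (negbTE (subdiv_code_neq_inl _ x13 x23 vx)).
case/and3P=> x13 x23 vx /and3P[y13 y23 vy] noswap.
case/(subdiv_inj (@KP_adj_sym n p) (@KP_adj_irr n p) (kp_of_code_adj x13 x23 vx)
                 (kp_of_code_adj y13 y23 vy)).
  by case=> /(kp_of_code_inj x13 y13)-> /(kp_of_code_inj x23 y23)->.
case=> /(kp_of_code_inj x13 y23) e1 /(kp_of_code_inj x23 y13) e2.
by move: noswap xS; rewrite -e1 -e2 => /negbTE->.
Qed.

Lemma packing_le6_v_neq1 a (c : T -> nat) : packing_coloring adj a c -> a <= 6 ->
  (forall j, c (inl (inl j)) != 1) -> c (inl (inr (ix 0, px 0 false))) != 1.
Proof.
move=> hc ha no1_inl; apply/eqP => cv; move/negP: fssd3_not_colorable; apply.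
apply: (extendable_complete (col := fun r => c (fssd_of_code (fssd3_at r)))).
  move=> r _; rewrite /fcode_colors; case: eqP => [->|_]; first by rewrite /fssd_of_code /= cv.
  have /andP[c1 ca] := packing_color_range hc (fssd_of_code (fssd3_at r)).
  case: ifP => [/andP[/eqP e /eqP u]|_]; last by rewrite mem_iota; lia.
  move: c1 ca; have -> : fssd_of_code (fssd3_at r) = inl (inl (ix (fssd3_at r).1.1)).
    by rewrite /fssd_of_code -e eqxx /kp_of_code u.
  move=> c1 ca; rewrite mem_iota ltn_neqAle eq_sym no1_inl c1 /=.
  exact: leq_ltn_trans (leq_trans ca ha) _.
move=> r s /andP[sr rK] crs; rewrite ltnNge; apply/negP => le.
have sK : s < size fssd3 by lia.
have /andP[_ ca] := packing_color_range hc (fssd_of_code (fssd3_at r)).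
have dD := leq_ltn_trans le (leq_ltn_trans (leq_trans ca ha) (ltnSn 6)).
have w := dist_table_within fssd_of_code_adj ((0, None), (0, None)) rK sK dD.
have := fssd_of_code_inj (mem_nth _ rK) (mem_nth _ sK) (packing_eq_close hc w le crs).
by move/eqP; rewrite nth_uniq ?fssd3_uniq // => /eqP rs; rewrite rs ltnn in sr.
Qed.

End SmallCase.

Section ColorOne.
Variables (n p m : nat) (k0 : 'I_m) (a : nat).
Local Notation B := ('I_n + 'I_n * 'I_p)%type.
Local Notation KP := (@KP_adj n p).
Local Notation T :=
  (B + {e : B * B | KP e.1 e.2 && (enum_rank e.1 < enum_rank e.2)%N} * 'I_m)%type.
Variable c : T -> nat.
Hypothesis hc : packing_coloring (@fssd_adj B KP m) a c.
Hypothesis hp : 1 < p.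

Lemma inl_color_neq1 i : 2 < n -> a <= n + 3 -> c (inl (inl i)) != 1.
Proof.
move=> hn ha; apply/eqP => /(color1_degree_lt (@KP_adj_sym n p) (@KP_adj_irr n p) k0 hc).
rewrite card_KP_nbhd_inl; nia.
Qed.

Hypothesis no1_inl : forall j, c (inl (inl j)) != 1.

Lemma inr_color_neq1_n_gt3 i g : 3 < n -> a <= n + 3 -> c (inl (inr (i, g))) != 1.
Proof.
move=> hn ha; apply/eqP => cv.
have KPsym := @KP_adj_sym n p; have KPirr := @KP_adj_irr n p.
have [g' gg'] := P_adj_exists g hp.
have ngg' : g != g' by apply: contraTneq gg' => ->; rewrite P_adj_irr.
have Qadj := KP_clique_adj (i := i) gg'.
have vQ : inr (i, g) \in KP_clique i g g' by rewrite !inE eqxx.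
have wQ : inr (i, g') \in KP_clique i g g' by rewrite !inE eqxx orbT.
have u_no1 z : z \in [set inl j | j in [set~ i]] -> c (inl z) != 1.
  by case/imsetP => j _ ->.
case: (c (inl (inr (i, g'))) =P 1) => [cw|cw].
  have vw : inr (i, g) != inr (i, g') :> B by apply: contra ngg' => /eqP[->].
  have no1 : {in KP_clique i g g' :\ inr (i, g) :\ inr (i, g'), forall z, c (inl z) != 1}.
    move=> z; rewrite /KP_clique !inE => /and3P[zw zv].
    by rewrite (negbTE zv) (negbTE zw) /=; apply: u_no1.
  have := card_clique_le_color1_pair KPsym KPirr k0 hc Qadj vQ wQ vw cv cw no1.
  by rewrite card_KP_clique //; lia.
have no1 : {in KP_clique i g g' :\ inr (i, g), forall z, c (inl z) != 1}.
  move=> z; rewrite /KP_clique !inE => /andP[zv]; rewrite (negbTE zv) /=.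
  by case/orP=> [/eqP->|]; [apply/eqP | apply: u_no1].
have := card_clique_le_color1 KPsym KPirr k0 hc Qadj vQ cv no1.
by rewrite card_KP_clique //; lia.
Qed.

Lemma inr_color_neq1_a_le6 i g : 2 < n -> a <= 6 -> c (inl (inr (i, g))) != 1.
Proof.
move=> hn ha; have [g' gg'] := P_adj_exists g hp.
have n_gt0 : 0 < n by lia.
pose ix k : 'I_n := Ordinal (ltn_pmod (i + k) n_gt0).
pose px (k : nat) (h : bool) := if h then g' else g.
have ix_inj k l : k < 3 -> l < 3 -> ix k = ix l -> k = l.
  move=> k3 l3 /(congr1 val) /= /eqP; rewrite eqn_modDl !modn_small; [by move/eqP | lia..].
have ix0 : ix 0 = i by apply: val_inj; rewrite /= addn0 modn_small.
have := packing_le6_v_neq1 (px := px) k0 ix_inj (fun=> gg') hc ha no1_inl.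
by rewrite ix0.
Qed.

End ColorOne.

Theorem lemma1 (n p m : nat) (hn : (3 <= n)%N) (hp : (2 <= p)%N) (hm : (1 <= m)%N)
  (a : nat) (ha : (a <= n + 3)%N)
  (c : ('I_n + 'I_n * 'I_p)
       + {e : ('I_n + 'I_n * 'I_p) * ('I_n + 'I_n * 'I_p) |
            KP_adj e.1 e.2 && (enum_rank e.1 < enum_rank e.2)%N} * 'I_m -> nat)
  (hc : packing_coloring (@fssd_adj ('I_n + 'I_n * 'I_p)%type (@KP_adj n p) m) a c) :
  (forall i : 'I_n, c (inl (inl i)) <> 1%N) /\
  (forall (i : 'I_n) (g : 'I_p), c (inl (inr (i, g))) <> 1%N).
Proof.
have k0 : 'I_m := Ordinal hm.
have no1_inl i : c (inl (inl i)) != 1 := inl_color_neq1 k0 hc hp i hn ha.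
split=> [i|i g]; apply/eqP; first exact: no1_inl.
have [n_gt3|n_le3] := ltnP 3 n.
  exact (inr_color_neq1_n_gt3 k0 hc hp no1_inl i g n_gt3 ha).
by apply: (inr_color_neq1_a_le6 k0 hc hp no1_inl i g hn); lia.
Qed.
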